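(* Let $G$ be a subgroup of the affine group $\mathcal G$ with a unitary representation $G\ni g\mapsto U_g$ on a separable Hilbert space $\mathcal H$, and let $\dot A$ be a closed densely defined symmetric operator in $\mathcal H$ which is $G$-invariant with respect to this representation. Suppose that $A$ is a maximal dissipative extension of $\dot A$. Then for every $g\in G$ the restriction $A_g=(\dot A)^*|_{D_g}$ of the adjoint operator $(\dot A)^*$ to $D_g=U_g(\mathrm{Dom}(A))$ is a maximal dissipative extension of $\dot A$.
   Context: $\mathcal G$ denotes the group (under composition) of affine maps $g(x)=ax+b$ of $\mathbb R$ with $a>0$, $b\in\mathbb R$. For an operator $A$ and $g(x)=ax+b$, $g(A)$ denotes $aA+bI$. A densely defined closed operator $A$ is called $G$-invariant (with respect to a unitary representation $g\mapsto U_g$ of a subgroup $G\subset\mathcal G$) if for all $g\in G$ one has $U_g(\mathrm{Dom}(A))=\mathrm{Dom}(A)$ and $U_gAU_g^*f=aAf+bf$ for all $f\in\mathrm{Dom}(A)$, where $g(x)=ax+b$. An operator is dissipative if $\operatorname{Im}(Af,f)\ge0$ on its domain, and maximal dissipative if it has no proper dissipative extension. *)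

From HB Require Import structures.
From mathcomp Require Import all_boot all_order all_algebra.
From mathcomp Require Import reals.
From mathcomp.real_closed Require Import complex.
From Stdlib Require Import ClassicalEpsilon.
Set Implicit Arguments. Unset Strict Implicit. Unset Printing Implicit Defensive.
Import Order.TTheory GRing.Theory Num.Theory.
Local Open Scope ring_scope.
Local Open Scope complex_scope.

Section Hilbert.
Variables (R : realType) (H : lmodType R[i]) (ip : H -> H -> R[i]).

Definition is_inner_product : Prop :=
  [/\ forall (a : R[i]) x y z, ip (a *: x + y) z = a * ip x z + ip y z,
      forall x y, ip y x = conjc (ip x y),
      forall x, 0 <= complex.Re (ip x x) /\ complex.Im (ip x x) = 0
    & forall x, ip x x = 0 -> x = 0].

Definition hnorm (x : H) : R := Num.sqrt (complex.Re (ip x x)).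

Definition hconv (u : nat -> H) (x : H) : Prop :=
  forall e : R, 0 < e -> exists N, forall n, (N <= n)%N -> hnorm (u n - x) < e.

Definition hcauchy (u : nat -> H) : Prop :=
  forall e : R, 0 < e -> exists N, forall m n, (N <= m)%N -> (N <= n)%N ->
    hnorm (u m - u n) < e.

Definition hdense (D : H -> Prop) : Prop :=
  forall x (e : R), 0 < e -> exists y, D y /\ hnorm (x - y) < e.

Definition is_separable_hilbert : Prop :=
  [/\ is_inner_product,
      forall u, hcauchy u -> exists x, hconv u x
    & exists s : nat -> H, hdense (fun y => exists n, y = s n)].

Record op := Op { dom : H -> Prop; app : H -> H }.

Definition is_linop (A : op) : Prop :=
  [/\ dom A 0,
      forall (a : R[i]) x y, dom A x -> dom A y -> dom A (a *: x + y)
    & forall (a : R[i]) x y, dom A x -> dom A y ->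
        app A (a *: x + y) = a *: app A x + app A y].

Definition densely_defined (A : op) : Prop := hdense (dom A).

Definition closed_op (A : op) : Prop :=
  forall (u : nat -> H) x y, (forall n, dom A (u n)) -> hconv u x ->
    hconv (fun n => app A (u n)) y -> dom A x /\ app A x = y.

Definition symmetric_op (A : op) : Prop :=
  densely_defined A /\
  forall f g, dom A f -> dom A g -> ip (app A f) g = ip f (app A g).

Definition op_adjoint (A : op) : op :=
  Op (fun g => exists h, forall f, dom A f -> ip (app A f) g = ip f h)
     (fun g => epsilon (inhabits 0)
                 (fun h => forall f, dom A f -> ip (app A f) g = ip f h)).

Definition op_restrict (A : op) (D : H -> Prop) : op := Op D (app A).

Definition extends (A B : op) : Prop :=
  (forall f, dom A f -> dom B f) /\ (forall f, dom A f -> app B f = app A f).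

Definition dissipative (A : op) : Prop :=
  forall f, dom A f -> 0 <= complex.Im (ip (app A f) f).

Definition maximal_dissipative (A : op) : Prop :=
  [/\ is_linop A, dissipative A &
      forall B, is_linop B -> dissipative B -> extends A B ->
        forall f, dom B f -> dom A f].

Definition himage (U : H -> H) (D : H -> Prop) : H -> Prop :=
  fun y => exists x, D x /\ y = U x.

(** Affine maps g(x) = a x + b, a > 0, encoded as pairs (a, b). *)
Definition aff_comp (g h : R * R) : R * R := (g.1 * h.1, g.1 * h.2 + g.2).
Definition aff_inv (g : R * R) : R * R := (g.1^-1, - (g.2 / g.1)).

Definition affine_subgroup (G : R * R -> Prop) : Prop :=
  [/\ forall g, G g -> 0 < g.1,
      G (1, 0),
      forall g h, G g -> G h -> G (aff_comp g h)
    & forall g, G g -> G (aff_inv g)].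

Definition is_adjoint_map (T S : H -> H) : Prop :=
  forall x y, ip (T x) y = ip x (S y).

Definition unitary (T : H -> H) : Prop :=
  [/\ forall (a : R[i]) x y, T (a *: x + y) = a *: T x + T y,
      forall x y, ip (T x) (T y) = ip x y
    & forall y, exists x, T x = y].

Definition unitary_rep (G : R * R -> Prop) (U : R * R -> H -> H) : Prop :=
  [/\ forall g, G g -> unitary (U g),
      forall x, U (1, 0) x = x
    & forall g h, G g -> G h -> forall x, U (aff_comp g h) x = U g (U h x)].

Definition G_invariant (G : R * R -> Prop) (U : R * R -> H -> H) (A : op) : Prop :=
  forall g, G g ->
    (forall y, dom A y <-> himage (U g) (dom A) y) /\
    (forall S, is_adjoint_map (U g) S -> forall f, dom A f ->
       U g (app A (S f)) = (g.1)%:C *: app A f + (g.2)%:C *: f).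

End Hilbert.

(** Let [gi] be the inverse of [g] in the affine group.  On [U_g Dom(A)] the
    adjoint of the symmetric operator acts as [U_g gi(A) U_g^*]: a dissipative
    extension of a symmetric operator is a restriction of its adjoint, and by
    [G]-invariance [U_g^*] carries the symmetric operator to [gi] of itself.
    So [A_g = U_g gi(A) U_g^*], and maximal dissipativity survives unitary
    conjugation followed by a positive affine map [aA + b], because the inverse
    transformation is of the same kind and so preserves dissipativity too. *)

From HB Require Import structures.
From mathcomp Require Import all_boot all_order all_algebra.
From mathcomp Require Import reals.
From mathcomp.real_closed Require Import complex.
From Stdlib Require Import ClassicalEpsilon.
From mathcomp Require Import ring lra.
Import Order.TTheory GRing.Theory Num.Theory.
Set Implicit Arguments. Unset Strict Implicit.
Local Open Scope ring_scope.
Local Open Scope complex_scope.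

Section ComplexFacts.
Variable R : realType.

Lemma affine_ge0_slope0 (k c : R) : (forall s : R, 0 <= s * k + c) -> k = 0.
Proof.
move=> ge0; apply/eqP; apply/negPn/negP => k_neq0.
by have := ge0 (- (c + 1) / k); rewrite divfK //; lra.
Qed.

(* Testing with real and purely imaginary [lam] yields affine functions of
   [lam] that are bounded below, hence constant. *)
Lemma Im_sesquilinear_ge0_conj (p w v c : R[i]) : complex.Im p = 0 ->
  (forall lam : R[i],
     0 <= complex.Im (lam * conjc lam * p + lam * w + conjc lam * v + c)) ->
  w = conjc v.
Proof.
case: p => p1 p2; case: w => w1 w2; case: v => v1 v2; case: c => c1 c2 /= -> ge0.
have Im_sum : w2 + v2 = 0.
  apply: (@affine_ge0_slope0 _ c2) => s; have := ge0 (Complex s 0) => /=.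
  by congr (_ <= _); ring.
have Re_diff : w1 - v1 = 0.
  apply: (@affine_ge0_slope0 _ c2) => s; have := ge0 (Complex 0 s) => /=.
  by congr (_ <= _); ring.
by congr Complex; lra.
Qed.

Lemma ImD (u v : R[i]) : complex.Im (u + v) = complex.Im u + complex.Im v.
Proof. by case: u; case: v. Qed.

Lemma Im_realM (r : R) (z : R[i]) : complex.Im (r%:C * z) = r * complex.Im z.
Proof. by case: z => x y /=; ring. Qed.

End ComplexFacts.

Section InnerProduct.
Variables (R : realType) (H : lmodType R[i]) (ip : H -> H -> R[i]).
Hypothesis hip : is_inner_product ip.

Lemma ipDZl a x y z : ip (a *: x + y) z = a * ip x z + ip y z.
Proof. by case: hip. Qed.

Lemma ipC x y : ip y x = conjc (ip x y).
Proof. by case: hip. Qed.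

Lemma ip_self_Re x : 0 <= complex.Re (ip x x).
Proof. by case: hip => _ _ /(_ x) []. Qed.

Lemma ip_self_Im x : complex.Im (ip x x) = 0.
Proof. by case: hip => _ _ /(_ x) []. Qed.

Lemma ip0l z : ip 0 z = 0.
Proof.
have := ipDZl 1 0 0 z; rewrite scaler0 addr0 mul1r => e.
by apply: (addrI (ip 0 z)); rewrite -e addr0.
Qed.

Lemma ipZl a x z : ip (a *: x) z = a * ip x z.
Proof. by rewrite -[a *: x]addr0 ipDZl ip0l addr0. Qed.

Lemma ipDl x y z : ip (x + y) z = ip x z + ip y z.
Proof. by have := ipDZl 1 x y z; rewrite scale1r mul1r. Qed.

Lemma ipNl x y : ip (- x) y = - ip x y.
Proof. by rewrite -scaleN1r ipZl mulN1r. Qed.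

Lemma ipDZr a x y z : ip x (a *: y + z) = conjc a * ip x y + ip x z.
Proof. by rewrite ipC ipDZl rmorphD rmorphM /= -!ipC. Qed.

Lemma ipZr a x y : ip x (a *: y) = conjc a * ip x y.
Proof. by rewrite ipC ipZl rmorphM /= -ipC. Qed.

Lemma ipDr x y z : ip x (y + z) = ip x y + ip x z.
Proof. by rewrite ipC ipDl rmorphD /= -!ipC. Qed.

Lemma ipNr x y : ip x (- y) = - ip x y.
Proof. by rewrite ipC ipNl rmorphN /= -ipC. Qed.

(* For [f] in [D], [|h - f|^2 = |h|^2 + |f|^2 >= |h|^2]; as [h] is a limit of
   such [f], this forces [|h| = 0]. *)
Lemma ip_dense_orthogonal_eq0 (D : H -> Prop) h :
  hdense ip D -> (forall f, D f -> ip f h = 0) -> h = 0.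
Proof.
move=> dD orth.
have norm_le f : D f -> complex.Re (ip h h) <= complex.Re (ip (h - f) (h - f)).
  move=> Df; rewrite ipDl !ipDr !ipNl !ipNr (orth _ Df) [ip h f]ipC (orth _ Df).
  rewrite rmorph0 !subr0 opprK; have := ip_self_Re f.
  by case: (ip h h) => ? ?; case: (ip f f) => ? ? /=; lra.
have Re0 : complex.Re (ip h h) = 0.
  apply/eqP; rewrite eq_le ip_self_Re andbT leNgt; apply/negP => Re_gt0.
  have norm_gt0 : 0 < hnorm ip h by rewrite sqrtr_gt0.
  have [f [Df]] := dD h _ norm_gt0.
  rewrite /hnorm ltr_sqrt // => lt; have := norm_le _ Df; lra.
case: hip => _ _ _; apply.
by move: (ip_self_Im h) Re0; case: (ip h h) => ? ? /= -> ->.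
Qed.

Lemma ip_dense_inj (D : H -> Prop) h1 h2 :
  hdense ip D -> (forall f, D f -> ip f h1 = ip f h2) -> h1 = h2.
Proof.
move=> dD eq_ip; apply/eqP; rewrite -subr_eq0; apply/eqP.
apply: (ip_dense_orthogonal_eq0 dD) => f Df.
by rewrite ipDr ipNr eq_ip // subrr.
Qed.

Lemma op_adjointP (Ad : op H) g h : densely_defined ip Ad ->
  (forall f, dom Ad f -> ip (app Ad f) g = ip f h) ->
  dom (op_adjoint ip Ad) g /\ app (op_adjoint ip Ad) g = h.
Proof.
move=> dD adj; split; first by exists h.
set P := fun h0 => forall f, dom Ad f -> ip (app Ad f) g = ip f h0.
have Pe := epsilon_spec (inhabits 0) P (ex_intro _ h adj).
by apply: (ip_dense_inj dD) => f Df; rewrite -Pe // adj.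
Qed.

(* Dissipativity of [A] on [lam f + h] is a sesquilinear inequality in [lam]. *)
Lemma dissipative_ext_adjoint (Ad A : op H) :
  symmetric_op ip Ad -> extends Ad A -> is_linop A -> dissipative ip A ->
  forall h, dom A h -> forall f, dom Ad f -> ip (app Ad f) h = ip f (app A h).
Proof.
move=> [_ sym] [extD extA] [_ linD linA] dissA h Dh f Df.
rewrite [ip f _]ipC.
apply: (@Im_sesquilinear_ge0_conj _ (ip (app Ad f) f) _ _ (ip (app A h) h)).
  have : ip (app Ad f) f = conjc (ip (app Ad f) f) by rewrite -ipC sym.
  by case: (ip (app Ad f) f) => ? ? /= []; lra.
move=> lam; have := dissA _ (linD lam _ _ (extD _ Df) Dh).
rewrite linA; [|exact: extD|exact: Dh].
rewrite (extA _ Df) ipDZl !ipDZr.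
by congr (_ <= complex.Im _); ring.
Qed.

Lemma unitary_inv (V W : H -> H) :
  unitary ip V -> cancel V W -> cancel W V -> unitary ip W.
Proof.
move=> [linV isoV _] VK WK; split.
- by move=> a x y; apply: (can_inj VK); rewrite linV !WK.
- by move=> x y; rewrite -isoV !WK.
- by move=> y; exists (V y).
Qed.

Lemma unitary0 (V : H -> H) : unitary ip V -> V 0 = 0.
Proof.
move=> [linV _ _]; have := linV 1 0 0; rewrite scaler0 addr0 scale1r => e.
by apply: (addrI (V 0)); rewrite -e addr0.
Qed.

Lemma unitaryD (V : H -> H) : unitary ip V -> forall x y, V (x + y) = V x + V y.
Proof. by case=> linV _ _ x y; have := linV 1 x y; rewrite !scale1r. Qed.

Lemma unitaryZ (V : H -> H) : unitary ip V -> forall a x, V (a *: x) = a *: V x.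
Proof.
by move=> uV a x; case: (uV) => linV _ _; rewrite -[a *: x]addr0 linV (unitary0 uV) addr0.
Qed.

Lemma unitary_adjoint (V W : H -> H) :
  unitary ip V -> cancel W V -> is_adjoint_map ip V W.
Proof. by move=> [_ isoV _] WK x y; rewrite -{1}(WK y) isoV. Qed.

End InnerProduct.

Section AffineConjugation.
Variables (R : realType) (H : lmodType R[i]) (ip : H -> H -> R[i]).
Hypothesis hip : is_inner_product ip.

(* [W] is meant to be the inverse of [V]: this is [V (a A + b) V^-1]. *)
Definition op_affine_conj (V W : H -> H) (a b : R) (A : op H) : op H :=
  Op (himage V (dom A)) (fun y => V (a%:C *: app A (W y) + b%:C *: W y)).

Variables (V W : H -> H).
Hypotheses (uV : unitary ip V) (VK : cancel V W).

Lemma op_affine_conjE (a b : R) (A : op H) x :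
  app (op_affine_conj V W a b A) (V x) = V (a%:C *: app A x + b%:C *: x).
Proof. by rewrite /= VK. Qed.

Lemma scalerDZ (c1 c2 c : R[i]) (p1 p2 x1 x2 : H) :
  c1 *: (c *: p1 + p2) + c2 *: (c *: x1 + x2) =
  c *: (c1 *: p1 + c2 *: x1) + (c1 *: p2 + c2 *: x2).
Proof. by rewrite !scalerDr !scalerA [c1 * c]mulrC [c2 * c]mulrC addrACA. Qed.

Lemma is_linop_affine_conj (a b : R) (A : op H) :
  is_linop A -> is_linop (op_affine_conj V W a b A).
Proof.
case: uV => linV _ _ [A0 linD linA]; split.
- by exists 0; rewrite (unitary0 uV).
- move=> c _ _ [x1 [D1 ->]] [x2 [D2 ->]].
  by exists (c *: x1 + x2); rewrite linV; split=> //; apply: linD.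
- move=> c _ _ [x1 [D1 ->]] [x2 [D2 ->]].
  by rewrite -linV !op_affine_conjE ?linA // -linV scalerDZ.
Qed.

Lemma dissipative_affine_conj (a b : R) (A : op H) : 0 <= a ->
  dissipative ip A -> dissipative ip (op_affine_conj V W a b A).
Proof.
case: uV => _ isoV _ a_ge0 dissA _ [x [Dx ->]].
rewrite op_affine_conjE isoV (ipDZl hip) (ipZl hip) ImD !Im_realM (ip_self_Im hip).
rewrite mulr0 addr0.
exact/mulr_ge0/dissA.
Qed.

Lemma op_adjoint_affine_conj (Ad A : op H) (a b : R) :
  symmetric_op ip Ad -> extends Ad A -> is_linop A -> dissipative ip A ->
  (forall f, dom Ad f -> app Ad (V f) = V (a%:C *: app Ad f + b%:C *: f)) ->
  (forall f, dom Ad f -> himage V (dom Ad) f) ->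
  forall y, dom (op_affine_conj V W a b A) y ->
    dom (op_adjoint ip Ad) y /\
    app (op_adjoint ip Ad) y = app (op_affine_conj V W a b A) y.
Proof.
case: uV => _ isoV _ symD extA linA dissA appV domV _ [x [Dx ->]].
apply: (op_adjointP hip); first by case: symD.
move=> f' Df'; have [f [Df ->]] := domV f' Df'.
rewrite appV // op_affine_conjE !isoV (ipDZl hip) (ipZl hip) (ipDZr hip).
by rewrite (ipZr hip) !conjc_real (dissipative_ext_adjoint hip symD extA linA dissA Dx Df).
Qed.

End AffineConjugation.

Section MaximalDissipative.
Variables (R : realType) (H : lmodType R[i]) (ip : H -> H -> R[i]).
Hypothesis hip : is_inner_product ip.

Lemma extends_trans (A B C : op H) : extends A B -> extends B C -> extends A C.
Proof.
move=> [dAB aAB] [dBC aBC]; split=> f Df; first exact/dBC/dAB.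
by rewrite aBC ?aAB //; exact: dAB.
Qed.

Lemma maximal_dissipative_ext (A B : op H) : extends A B ->
  (forall f, dom B f -> dom A f) ->
  maximal_dissipative ip A -> maximal_dissipative ip B.
Proof.
move=> extAB dBA [[A0 linD linA] dissA maxA].
have [dAB aAB] := extAB.
have appBA f : dom B f -> app B f = app A f by move/dBA; exact: aAB.
have linDB c x y : dom B x -> dom B y -> dom B (c *: x + y).
  by move=> /dBA Dx /dBA Dy; exact/dAB/linD.
split.
- split=> [|c x y Dx Dy|c x y Dx Dy]; [exact: dAB | exact: linDB |].
  rewrite appBA; last exact: linDB.
  by rewrite !appBA // linA //; exact: dBA.
- by move=> f Df; rewrite appBA //; exact/dissA/dBA.
- move=> C linC dissC extBC f Cf; apply: dAB.
  exact: (maxA C linC dissC (extends_trans extAB extBC)).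
Qed.

(* A dissipative extension [B] of [V (a A + b) V^-1] is undone by the inverse
   transformation, which stays dissipative because [a^-1 > 0]; it then extends
   [A], so maximality of [A] bounds the domain of [B]. *)
Lemma maximal_dissipative_affine_conj (V W : H -> H) (a b : R) (A : op H) :
  unitary ip V -> cancel V W -> cancel W V -> 0 < a ->
  maximal_dissipative ip A ->
  maximal_dissipative ip (op_affine_conj V W a b A).
Proof.
move=> uV VK WK a_gt0 [linA dissA maxA].
have uW := unitary_inv uV VK WK.
have linC := is_linop_affine_conj uV VK a b linA.
have dissC := dissipative_affine_conj (b := b) hip uV VK (ltW a_gt0) dissA.
split=> // B linB dissB [dAB aAB] f Df.
pose B' := op_affine_conj W V a^-1 (- (b / a)) B.
have extAB' : extends A B'.
  have DB x : dom A x -> dom B (V x) by move=> Dx; apply: dAB; exists x.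
  split=> x Dx; first by exists (V x); rewrite VK; split=> //; exact: DB.
  rewrite -{1}(VK x) (op_affine_conjE WK) aAB; last by exists x.
  rewrite (op_affine_conjE VK).
  rewrite -!(unitaryZ uV) -(unitaryD uV) VK scalerDr !scalerA -addrA -scalerDl.
  rewrite -!rmorphM /= mulVf ?gt_eqF // -rmorphD /= [a^-1 * b]mulrC addrN.
  by rewrite scale0r addr0 scale1r.
have DWf : dom A (W f).
  apply: (maxA B' (is_linop_affine_conj uW WK _ _ linB) _ extAB'); last by exists f.
  by apply: dissipative_affine_conj => //; rewrite invr_ge0 ltW.
by exists (W f); rewrite WK.
Qed.

End MaximalDissipative.

Section AffineRepresentation.
Variables (R : realType) (H : lmodType R[i]) (ip : H -> H -> R[i]).
Variables (G : R * R -> Prop) (U : R * R -> H -> H).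
Hypotheses (hG : affine_subgroup G) (hU : unitary_rep ip G U).
Variable g : R * R.
Hypothesis Gg : G g.

Lemma aff_inv_gt0 : 0 < (aff_inv g).1.
Proof. by case: hG => pos _ _ _; rewrite invr_gt0 pos. Qed.

Lemma rep_unitary : unitary ip (U g).
Proof. by case: hU => + _ _; apply. Qed.

Lemma rep_aff_invK : cancel (U (aff_inv g)) (U g).
Proof.
case: hG hU => pos _ _ Ginv [_ U1 Ucomp] x; rewrite -Ucomp //; last exact: Ginv.
suff -> : aff_comp g (aff_inv g) = (1, 0) by exact: U1.
by rewrite /aff_comp /aff_inv /=; congr (_, _); field; exact: lt0r_neq0 (pos _ Gg).
Qed.

Lemma rep_aff_invVK : cancel (U g) (U (aff_inv g)).
Proof.
case: hG hU => pos _ _ Ginv [_ U1 Ucomp] x; rewrite -Ucomp //; last exact: Ginv.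
suff -> : aff_comp (aff_inv g) g = (1, 0) by exact: U1.
by rewrite /aff_comp /aff_inv /=; congr (_, _); field; exact: lt0r_neq0 (pos _ Gg).
Qed.

(* Invariance under [g^-1], with [U_(g^-1)^* = U_g], conjugated back by [U_g]. *)
Lemma G_invariant_rep_app (A : op H) : G_invariant ip G U A ->
  forall f, dom A f ->
  app A (U g f) = U g ((aff_inv g).1%:C *: app A f + (aff_inv g).2%:C *: f).
Proof.
case: hG hU => _ _ _ Ginv [Uun _ _] invA f Df.
have [_ appA] := invA _ (Ginv _ Gg).
rewrite -(appA (U g)) ?rep_aff_invK //.
exact/unitary_adjoint/rep_aff_invVK/Uun/Ginv.
Qed.

End AffineRepresentation.

Theorem lemma3p1 (R : realType) (H : lmodType R[i]) (ip : H -> H -> R[i])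
  (G : R * R -> Prop) (U : R * R -> H -> H) (Adot A : op H) :
  is_separable_hilbert ip ->
  affine_subgroup G ->
  unitary_rep ip G U ->
  is_linop Adot -> closed_op ip Adot -> symmetric_op ip Adot ->
  G_invariant ip G U Adot ->
  extends Adot A -> maximal_dissipative ip A ->
  forall g, G g ->
    let Ag := op_restrict (op_adjoint ip Adot) (himage (U g) (dom A)) in
    (forall f, himage (U g) (dom A) f -> dom (op_adjoint ip Adot) f) /\
    extends Adot Ag /\ maximal_dissipative ip Ag.
Proof.
move=> [hip _ _] hG hU _ _ symD invD extA maxA g Gg Ag.
have [linA dissA _] := maxA.
have domU f : dom Adot f -> himage (U g) (dom Adot) f.
  by case: (invD g Gg) => /(_ f) [].
have adjA := op_adjoint_affine_conj hip (rep_unitary hU Gg)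
  (rep_aff_invVK hG hU Gg) symD extA linA dissA
  (G_invariant_rep_app hG hU Gg invD) domU.
split; [by move=> f /adjA [] | split].
- split=> f Df.
    have [f' [Df' ->]] := domU f Df; exists f'; split=> //.
    by case: extA => + _; apply.
  case: symD => dD sym.
  exact: (op_adjointP hip dD (fun h Dh => sym h f Dh Df)).2.
- have maxC := maximal_dissipative_affine_conj hip (aff_inv g).2
    (rep_unitary hU Gg) (rep_aff_invVK hG hU Gg) (rep_aff_invK hG hU Gg)
    (aff_inv_gt0 hG Gg) maxA.
  apply: (maximal_dissipative_ext _ _ maxC); last by [].
  by split=> [y|y Dy]; [|exact: (adjA y Dy).2].
Qed.
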